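(* Assume (A), (R), (S) and let $c$ be a global solution of (E) with initial condition $c^{\mathrm{in}}\in\ell^1_1$. Then $$\mathfrak m_1(t)=\sum_{k=1}^\infty kc_k(t)\le\max\{\mathfrak m_1^{\mathrm{in}},\widehat{\mathfrak s}_1\}\quad\text{for all }t\ge0.$$ Moreover there exists $T>0$, depending only on $\mathfrak m_1^{\mathrm{in}}$, $\widehat{\mathfrak s}_1$ and $R_*$, such that $\mathfrak m_1(t)\le 2\widehat{\mathfrak s}_1$ for all $t\ge T$.
   Context: Throughout, $\mathbb N=\{1,2,\dots\}$. We consider the forced discrete coagulation equation $$\frac{d}{dt}c_k=\frac12\sum_{\ell=1}^{k-1}a_{k-\ell,\ell}c_{k-\ell}c_\ell-c_k\sum_{\ell=1}^{\infty}a_{k,\ell}c_\ell+s_k-r_kc_k,\qquad k\in\mathbb N,\tag{E}$$ with real coefficients satisfying the standing assumptions: (A) $a_{k,\ell}=a_{\ell,k}$ and $0\le a_{k,\ell}\le A_*(k^\alpha\ell^\beta+k^\beta\ell^\alpha)$ for all $k,\ell\in\mathbb N$, with constants $A_*>0$, $\alpha,\beta\in[0,1]$, $\alpha\le\beta$; (R) $r_k\ge R_*k^\gamma$ for all $k\in\mathbb N$, with $R_*>0$ and $\gamma>\max\{0,\alpha+\beta-1\}$; (S) $s_k\ge 0$ for all $k$, and for every $\mu\ge0$ there is $\mathfrak s_\mu>0$ with $\sum_{k\ge1}k^\mu s_k\le\mathfrak s_\mu$. Write $\widehat A_*=A_*/R_*$ and $\widehat{\mathfrak s}_\mu=\mathfrak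 s_\mu/R_*$. For $\mu\ge0$, $\ell^1_\mu$ is the set of sequences $(c_k)_{k\in\mathbb N}$ with $c_k\in[0,\infty)$ and $\sum_k k^\mu c_k<\infty$. Solution: a sequence $c=(c_k)_{k\in\mathbb N}$ of continuous functions $c_k:[0,T)\to[0,\infty)$ is a solution of (E) on $[0,T)$ with initial condition $c^{\mathrm{in}}\in\ell^1_1$ if (i) for each $k$, (E) holds for all $t\in(0,T)$; (ii) for each $\mu\ge1$, $c\in L^\infty([0,T),\ell^1_1)\cap C^1((0,T),\ell^1_\mu)$; (iii) $c_k(0)=c_k^{\mathrm{in}}$ for all $k$. It is a global solution if $T=\infty$. Moments: $\mathfrak m_\mu(t)=\sum_k k^\mu c_k(t)$, $\mathfrak m_1^{\mathrm{in}}=\sum_k k c_k^{\mathrm{in}}$. *)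

From Stdlib Require Import Reals Lra.
Open Scope R_scope.

(* Sequences indexed by N = {1,2,...} are modelled as functions nat -> R;
   the value at index 0 is never used. *)

Fixpoint fsum (f : nat -> R) (n : nat) : R :=
  match n with
  | O => 0
  | S m => fsum f m + f (S m)
  end.

Definition series_sum (f : nat -> R) (L : R) : Prop :=
  Un_cv (fun n => fsum f n) L.

Definition wnorm_lt (mu : R) (x : nat -> R) (eps : R) : Prop :=
  exists S, series_sum (fun k => Rpower (INR k) mu * Rabs (x k)) S /\ S < eps.

Definition in_l1w (mu : R) (x : nat -> R) : Prop :=
  exists S, series_sum (fun k => Rpower (INR k) mu * Rabs (x k)) S.

Definition gain (a : nat -> nat -> R) (c : nat -> R -> R) (k : nat) (t : R) : R :=
  / 2 * fsum (fun l => a (k - l)%nat l * c (k - l)%nat t * c l t) (k - 1).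

(* t |-> c(t) is in C^1((0,infinity), l^1_mu) *)
Definition C1_l1w (mu : R) (c : nat -> R -> R) : Prop :=
  exists d : nat -> R -> R,
    (forall t, 0 < t -> in_l1w mu (fun k => c k t)) /\
    (forall t, 0 < t -> in_l1w mu (fun k => d k t)) /\
    (forall t, 0 < t -> forall eps, 0 < eps -> exists delta, 0 < delta /\
        forall h, h <> 0 -> Rabs h < delta -> 0 < t + h ->
          wnorm_lt mu (fun k => (c k (t + h) - c k t) / h - d k t) eps) /\
    (forall t, 0 < t -> forall eps, 0 < eps -> exists delta, 0 < delta /\
        forall t', 0 < t' -> Rabs (t' - t) < delta ->
          wnorm_lt mu (fun k => d k t' - d k t) eps).

Definition global_solution (a : nat -> nat -> R) (s r : nat -> R)
    (cin : nat -> R) (c : nat -> R -> R) : Prop :=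
  (forall k t, (1 <= k)%nat -> 0 <= t -> 0 <= c k t) /\
  (forall k t, (1 <= k)%nat -> 0 <= t -> forall eps, 0 < eps ->
      exists delta, 0 < delta /\ forall t', 0 <= t' -> Rabs (t' - t) < delta ->
        Rabs (c k t' - c k t) < eps) /\
  (forall k t, (1 <= k)%nat -> 0 < t ->
      exists L, series_sum (fun l => a k l * c l t) L /\
        derivable_pt_lim (c k) t (gain a c k t - c k t * L + s k - r k * c k t)) /\
  (exists M, forall t, 0 <= t ->
      exists S, series_sum (fun k => INR k * c k t) S /\ S <= M) /\
  (forall mu, 1 <= mu -> C1_l1w mu c) /\
  (forall k, (1 <= k)%nat -> c k 0 = cin k).

From Stdlib Require Import Reals Lra Lia ClassicalEpsilon.
Open Scope R_scope.

(* The truncated first moment M_N(t) = sum_{k <= N} k c_k(t) satisfies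
   M_N' <= s_1 - Rstar M_N.  Indeed the first moment of the truncated
   coagulation term is nonpositive (the symmetry i <-> k - i of the gain term
   turns its weighted sum into sum_{i+j <= N} i a_ij c_i c_j, dominated by the
   full loss sums), the source contributes at most s_1, and
   r_k >= Rstar k^gamma >= Rstar.  Gronwall's lemma then bounds M_N(t) by the
   relaxation profile s_1/Rstar + (m_1^in - s_1/Rstar) exp(-Rstar t), uniformly
   in N, and both claims are elementary properties of that profile. *)

Lemma fsum_ext f g n :
  (forall i, (1 <= i <= n)%nat -> f i = g i) -> fsum f n = fsum g n.
Proof.
  induction n as [|n IH]; intros H; simpl; [reflexivity|].
  rewrite IH, H; [reflexivity|lia|intros; apply H; lia].
Qed.

Lemma fsum_le f g n :
  (forall i, (1 <= i <= n)%nat -> f i <= g i) -> fsum f n <= fsum g n.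
Proof.
  induction n as [|n IH]; intros H; simpl; [lra|].
  assert (f (S n) <= g (S n)) by (apply H; lia).
  assert (fsum f n <= fsum g n) by (apply IH; intros; apply H; lia).
  lra.
Qed.

Lemma fsum_plus f g n : fsum (fun i => f i + g i) n = fsum f n + fsum g n.
Proof. induction n; simpl; lra. Qed.

Lemma fsum_minus f g n : fsum (fun i => f i - g i) n = fsum f n - fsum g n.
Proof. induction n; simpl; lra. Qed.

Lemma fsum_mult_l x f n : fsum (fun i => x * f i) n = x * fsum f n.
Proof. induction n; simpl; lra. Qed.

Lemma fsum_shift f n : fsum f (S n) = f 1%nat + fsum (fun i => f (S i)) n.
Proof. induction n as [|n IH]; simpl in *; [lra|]. rewrite IH; lra. Qed.

Lemma fsum_rev f n : fsum f n = fsum (fun i => f (S n - i)%nat) n.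
Proof.
  revert f; induction n as [|n IH]; intros f; [reflexivity|].
  rewrite fsum_shift, IH; cbn [fsum].
  replace (S (S n) - S n)%nat with 1%nat by lia.
  rewrite (fsum_ext (fun i => f (S (S n - i))) (fun i => f (S (S n) - i)%nat));
    [lra|].
  intros i Hi; f_equal; lia.
Qed.

Lemma fsum_le_series_sum f L n :
  (forall i, (1 <= i)%nat -> 0 <= f i) -> series_sum f L -> fsum f n <= L.
Proof.
  intros Hf HL; apply (growing_ineq (fun n => fsum f n)); [|exact HL].
  intros m; simpl; assert (0 <= f (S m)) by (apply Hf; lia); lra.
Qed.

Lemma series_sum_le f L B : (forall n, fsum f n <= B) -> series_sum f L -> L <= B.
Proof.
  intros HB HL; apply (Rle_cv_lim (Un := fun n => fsum f n) (Vn := fun _ => B)); [exact HB|exact HL|].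
  intros eps Heps; exists 0%nat; intros; unfold Rdist; rewrite Rminus_diag, Rabs_R0; lra.
Qed.

Section Coagulation.

Variables (a : nat -> nat -> R) (cc : nat -> R).
Hypothesis a_sym : forall i j, (1 <= i)%nat -> (1 <= j)%nat -> a i j = a j i.

Let F i j := a i j * cc i * cc j.

Let F_sym i j : (1 <= i)%nat -> (1 <= j)%nat -> F i j = F j i.
Proof. intros Hi Hj; unfold F; rewrite a_sym by assumption; ring. Qed.

(* Pairing i with N + 1 - i averages the weight i to (N + 1) / 2. *)
Lemma fsum_weighted_antidiagonal N :
  fsum (fun i => INR i * F i (S N - i)%nat) N
  = INR (S N) / 2 * fsum (fun l => F (S N - l)%nat l) N.
Proof.
  set (X := fsum (fun i => INR i * F i (S N - i)%nat) N).
  set (Y := fsum (fun l => F (S N - l)%nat l) N).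
  assert (HX : X = INR (S N) * Y - X).
  { unfold X at 1; rewrite fsum_rev.
    unfold X, Y; rewrite <- fsum_mult_l, <- fsum_minus.
    apply fsum_ext; intros i Hi.
    replace (S N - (S N - i))%nat with i by lia.
    rewrite F_sym, minus_INR by lia; ring. }
  lra.
Qed.

(* Passing from N to N + 1 adds the antidiagonal i + j = N + 1 on both sides. *)
Lemma fsum_gain_first_moment N :
  fsum (fun k => INR k * (/ 2 * fsum (fun l => a (k - l)%nat l * cc (k - l)%nat * cc l)
                                      (k - 1))) N
  = fsum (fun i => INR i * cc i * fsum (fun j => a i j * cc j) (N - i)) N.
Proof.
  fold F; induction N as [|N IH]; [reflexivity|].
  cbn [fsum]; rewrite IH.
  replace (S N - 1)%nat with N by lia.
  replace (S N - S N)%nat with 0%nat by lia; cbn [fsum].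
  rewrite (fsum_ext (fun i => INR i * cc i * fsum (fun j => a i j * cc j) (S N - i))
             (fun i => INR i * cc i * fsum (fun j => a i j * cc j) (N - i)
                       + INR i * F i (S N - i)%nat)).
  - rewrite fsum_plus, fsum_weighted_antidiagonal; unfold F; field.
  - intros i Hi; replace (S N - i)%nat with (S (N - i)) by lia; cbn [fsum].
    replace (S (N - i)) with (S N - i)%nat by lia; unfold F; ring.
Qed.

Hypothesis a_nonneg : forall i j, (1 <= i)%nat -> (1 <= j)%nat -> 0 <= a i j.
Hypothesis cc_nonneg : forall i, (1 <= i)%nat -> 0 <= cc i.

Lemma fsum_coagulation_first_moment_nonpos (L : nat -> R) N :
  (forall i n, (1 <= i)%nat -> fsum (fun j => a i j * cc j) n <= L i) ->
  fsum (fun k => INR k * (/ 2 * fsum (fun l => a (k - l)%nat l * cc (k - l)%nat * cc l)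
                                      (k - 1) - cc k * L k)) N <= 0.
Proof.
  intros HL.
  rewrite (fsum_ext _ (fun k => INR k * (/ 2 * fsum (fun l => a (k - l)%nat l
                        * cc (k - l)%nat * cc l) (k - 1)) - INR k * cc k * L k))
    by (intros; ring).
  rewrite fsum_minus, fsum_gain_first_moment.
  enough (fsum (fun i => INR i * cc i * fsum (fun j => a i j * cc j) (N - i)) N
          <= fsum (fun k => INR k * cc k * L k) N) by lra.
  apply fsum_le; intros i Hi.
  apply Rmult_le_compat_l; [|apply HL; lia].
  apply Rmult_le_pos; [apply pos_INR|apply cc_nonneg; lia].
Qed.

End Coagulation.

Lemma nonincreasing_of_deriv_nonpos (h : R -> R) :
  (forall t, 0 < t -> exists d, derivable_pt_lim h t d /\ d <= 0) ->
  limit1_in h (Rle 0) (h 0) 0 -> forall t, 0 <= t -> h t <= h 0.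
Proof.
  intros Hd Hlim t Ht.
  destruct (Req_dec t 0) as [->|Ht0]; [lra|].
  set (h' := fun x => epsilon (inhabits 0) (fun d => derivable_pt_lim h x d /\ d <= 0)).
  assert (Hh' : forall x, 0 < x -> derivable_pt_lim h x (h' x) /\ h' x <= 0)
    by (intros x Hx; apply epsilon_spec, Hd, Hx).
  apply Rle_plus_epsilon; intros eps Heps.
  destruct (Hlim eps Heps) as [delta [Hdelta Hnear]].
  set (e := Rmin (delta / 2) (t / 2)).
  assert (He : 0 < e) by (apply Rmin_glb_lt; lra).
  assert (e <= delta / 2) by apply Rmin_l.
  assert (e <= t / 2) by apply Rmin_r.
  destruct (MVT_cor2 h h' e t) as [x [Hmvt Hx]]; [lra|intros; apply Hh'; lra|].
  assert (h' x <= 0) by (apply Hh'; lra).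
  assert (Hte : h t <= h e) by nra.
  assert (Hclose : Rabs (h e - h 0) < eps).
  { apply Hnear; split; [lra|].
    simpl; unfold R_dist; rewrite Rminus_0_r, Rabs_pos_eq; lra. }
  apply Rabs_def2 in Hclose; lra.
Qed.

Lemma derivable_pt_lim_exp_scal rho t :
  derivable_pt_lim (fun x => exp (rho * x)) t (exp (rho * t) * rho).
Proof.
  apply (derivable_pt_lim_comp (fun x => rho * x) exp); [|apply derivable_pt_lim_exp].
  pose proof (derivable_pt_lim_scal id rho t 1 (derivable_pt_lim_id t)) as Hlin.
  rewrite Rmult_1_r in Hlin; exact Hlin.
Qed.

Lemma limit1_in_Rle0_exp_scal rho :
  limit1_in (fun x => exp (rho * x)) (Rle 0) (exp (rho * 0)) 0.
Proof.
  assert (Hc : continuity_pt (fun x => exp (rho * x)) 0).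
  { apply derivable_continuous_pt; exists (exp (rho * 0) * rho).
    apply derivable_pt_lim_exp_scal. }
  intros eps Heps; destruct (Hc eps Heps) as [delta [Hdelta Hnear]].
  exists delta; split; [exact Hdelta|]; intros x [_ Hx].
  destruct (Req_dec x 0) as [->|Hx0].
  - simpl; unfold R_dist; rewrite Rminus_diag, Rabs_R0; exact Heps.
  - apply Hnear; repeat split; auto.
Qed.

Lemma linear_differential_inequality (M : R -> R) (f rho : R) :
  0 < rho ->
  (forall t, 0 < t -> exists d, derivable_pt_lim M t d /\ d <= f - rho * M t) ->
  limit1_in M (Rle 0) (M 0) 0 ->
  forall t, 0 <= t -> M t <= f / rho + (M 0 - f / rho) * exp (- (rho * t)).
Proof.
  intros Hrho Hd Hlim t Ht.
  set (sig := f / rho).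
  set (h := fun x => (M x - sig) * exp (rho * x)).
  assert (Hdecr : h t <= h 0).
  { apply nonincreasing_of_deriv_nonpos; [| |exact Ht].
    - intros x Hx; destruct (Hd x Hx) as [d [HMd Hdle]].
      exists (d * exp (rho * x) + (M x - sig) * (exp (rho * x) * rho)); split.
      + apply (derivable_pt_lim_mult (fun y => M y - sig) (fun y => exp (rho * y))).
        * replace d with (d - 0) by ring.
          apply (derivable_pt_lim_minus M (fun _ => sig)); [exact HMd|].
          apply derivable_pt_lim_const.
        * apply derivable_pt_lim_exp_scal.
      + assert (rho * sig = f) by (unfold sig; field; lra).
        assert (0 < exp (rho * x)) by apply exp_pos.
        nra.
    - apply (limit_mul (fun y => M y - sig)); [|apply limit1_in_Rle0_exp_scal].
      apply (limit_minus M (fun _ => sig)); [exact Hlim|apply limit_free]. }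
  unfold h in Hdecr; rewrite Rmult_0_r, exp_0, Rmult_1_r in Hdecr.
  rewrite exp_Ropp.
  assert (0 < exp (rho * t)) by apply exp_pos.
  enough (M t - sig <= (M 0 - sig) / exp (rho * t)) by (unfold Rdiv in *; lra).
  apply Rmult_le_reg_r with (exp (rho * t)); [assumption|].
  field_simplify; lra.
Qed.

Lemma derivable_pt_lim_fsum (F : nat -> R -> R) (D : nat -> R) N t :
  (forall k, (1 <= k <= N)%nat -> derivable_pt_lim (F k) t (D k)) ->
  derivable_pt_lim (fun x => fsum (fun k => F k x) N) t (fsum D N).
Proof.
  induction N as [|N IH]; intros H; simpl; [apply derivable_pt_lim_const|].
  apply (derivable_pt_lim_plus (fun x => fsum (fun k => F k x) N) (F (S N)));
    [apply IH; intros; apply H|apply H]; lia.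
Qed.

Lemma limit1_in_fsum (F : nat -> R -> R) (D : R -> Prop) x0 N :
  (forall k, (1 <= k <= N)%nat -> limit1_in (F k) D (F k x0) x0) ->
  limit1_in (fun x => fsum (fun k => F k x) N) D (fsum (fun k => F k x0) N) x0.
Proof.
  induction N as [|N IH]; intros H; simpl; [apply (limit_free (fun _ => 0) D 0 x0)|].
  apply (limit_plus (fun x => fsum (fun k => F k x) N) (F (S N))); [apply IH; intros; apply H|apply H]; lia.
Qed.

Section FirstMoment.

Variables (a : nat -> nat -> R) (r s : nat -> R) (c : nat -> R -> R) (rho s1 : R).

Hypothesis a_sym : forall k l, (1 <= k)%nat -> (1 <= l)%nat -> a k l = a l k.
Hypothesis a_nonneg : forall k l, (1 <= k)%nat -> (1 <= l)%nat -> 0 <= a k l.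
Hypothesis rho_pos : 0 < rho.
Hypothesis r_ge : forall k, (1 <= k)%nat -> rho <= r k.
Hypothesis source_moment_le : forall n, fsum (fun k => INR k * s k) n <= s1.
Hypothesis c_nonneg : forall k t, (1 <= k)%nat -> 0 <= t -> 0 <= c k t.
Hypothesis c_cont0 : forall k, (1 <= k)%nat -> forall eps, 0 < eps ->
  exists delta, 0 < delta /\
    forall t, 0 <= t -> Rabs (t - 0) < delta -> Rabs (c k t - c k 0) < eps.
Hypothesis c_deriv : forall k t, (1 <= k)%nat -> 0 < t ->
  exists L, series_sum (fun l => a k l * c l t) L /\
    derivable_pt_lim (c k) t (gain a c k t - c k t * L + s k - r k * c k t).

Definition partial_moment N t := fsum (fun k => INR k * c k t) N.

Lemma partial_moment_right_continuous N :
  limit1_in (partial_moment N) (Rle 0) (partial_moment N 0) 0.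
Proof.
  apply (limit1_in_fsum (fun k t => INR k * c k t)); intros k Hk.
  apply (limit_mul (fun _ => INR k) (c k)); [exact (limit_free (fun _ => INR k) (Rle 0) 0 0)|].
  intros eps Heps; destruct (c_cont0 k ltac:(lia) eps Heps) as [delta [Hdelta Hnear]].
  exists delta; split; [exact Hdelta|]; intros x [Hx Hxdelta]; apply Hnear; assumption.
Qed.

Lemma partial_moment_deriv_le N t :
  0 < t ->
  exists d, derivable_pt_lim (partial_moment N) t d /\ d <= s1 - rho * partial_moment N t.
Proof.
  intros Ht.
  set (L := fun k => epsilon (inhabits 0) (fun L =>
              series_sum (fun l => a k l * c l t) L /\
              derivable_pt_lim (c k) t (gain a c k t - c k t * L + s k - r k * c k t))).
  assert (HL : forall k, (1 <= k)%nat ->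
            series_sum (fun l => a k l * c l t) (L k) /\
            derivable_pt_lim (c k) t (gain a c k t - c k t * L k + s k - r k * c k t))
    by (intros k Hk; apply epsilon_spec, c_deriv; assumption).
  exists (fsum (fun k => INR k * (gain a c k t - c k t * L k + s k - r k * c k t)) N).
  split.
  - apply (derivable_pt_lim_fsum (fun k x => INR k * c k x)); intros k Hk.
    apply (derivable_pt_lim_scal (c k)), HL; lia.
  - assert (Hcoag : fsum (fun k => INR k * (gain a c k t - c k t * L k)) N <= 0).
    { apply (fsum_coagulation_first_moment_nonpos a (fun l => c l t)); auto.
      - intros i Hi; apply c_nonneg; [exact Hi|lra].
      - intros i n Hi; apply fsum_le_series_sum; [|apply HL; exact Hi].
        intros j Hj; apply Rmult_le_pos; [apply a_nonneg|apply c_nonneg]; auto; lra. }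
    assert (Hremoval : rho * partial_moment N t <= fsum (fun k => INR k * r k * c k t) N).
    { unfold partial_moment; rewrite <- fsum_mult_l; apply fsum_le; intros k Hk.
      assert (rho <= r k) by (apply r_ge; lia).
      assert (0 <= INR k * c k t)
        by (apply Rmult_le_pos; [apply pos_INR|apply c_nonneg; lia || lra]).
      nra. }
    pose proof (source_moment_le N).
    rewrite (fsum_ext _ (fun k => INR k * (gain a c k t - c k t * L k) + INR k * s k
                                  - INR k * r k * c k t)) by (intros; ring).
    rewrite fsum_minus, fsum_plus; lra.
Qed.

Lemma first_moment_le (cin : nat -> R) (m1in : R) t m1 :
  (forall k, (1 <= k)%nat -> c k 0 = cin k) ->
  series_sum (fun k => INR k * cin k) m1in ->
  0 <= t -> series_sum (fun k => INR k * c k t) m1 ->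
  m1 <= s1 / rho + (m1in - s1 / rho) * exp (- (rho * t)).
Proof.
  intros Hinit Hm1in Ht Hm1.
  refine (series_sum_le _ _ _ _ Hm1); intros N.
  fold (partial_moment N t).
  assert (Hinit_moment : partial_moment N 0 <= m1in).
  { unfold partial_moment; rewrite (fsum_ext _ (fun k => INR k * cin k)).
    - apply fsum_le_series_sum; [|exact Hm1in]; intros k Hk; rewrite <- Hinit by exact Hk.
      apply Rmult_le_pos; [apply pos_INR|apply c_nonneg; [exact Hk|lra]].
    - intros k Hk; rewrite Hinit by lia; reflexivity. }
  pose proof (linear_differential_inequality (partial_moment N) s1 rho rho_pos
                (partial_moment_deriv_le N) (partial_moment_right_continuous N) t Ht).
  assert (0 < exp (- (rho * t))) by apply exp_pos.
  nra.
Qed.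

End FirstMoment.

Lemma relaxation_le_Rmax m sig rho t :
  0 <= rho -> 0 <= t -> sig + (m - sig) * exp (- (rho * t)) <= Rmax m sig.
Proof.
  intros Hrho Ht.
  assert (0 < exp (- (rho * t))) by apply exp_pos.
  assert (exp (- (rho * t)) <= 1).
  { rewrite <- exp_0; destruct (Req_dec (rho * t) 0) as [->|Hne].
    - rewrite Ropp_0; lra.
    - left; apply exp_increasing; nra. }
  pose proof (Rmax_l m sig); pose proof (Rmax_r m sig).
  destruct (Rle_or_lt sig m); nra.
Qed.

(* From this time on exp (- rho t) <= sig / m, so the profile is at most 2 sig. *)
Definition relaxation_time m sig rho := 1 + Rabs (ln (m / sig)) / rho.

Lemma relaxation_time_pos m sig rho : 0 < rho -> 0 < relaxation_time m sig rho.
Proof.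
  intros Hrho; unfold relaxation_time.
  assert (0 <= Rabs (ln (m / sig)) / rho)
    by (apply Rmult_le_pos; [apply Rabs_pos|left; apply Rinv_0_lt_compat, Hrho]).
  lra.
Qed.

Lemma relaxation_le_twice m sig rho t :
  0 < sig -> 0 < rho -> relaxation_time m sig rho <= t ->
  sig + (m - sig) * exp (- (rho * t)) <= 2 * sig.
Proof.
  intros Hsig Hrho Ht; unfold relaxation_time in Ht.
  assert (0 < exp (- (rho * t))) by apply exp_pos.
  destruct (Rle_or_lt m sig) as [Hm|Hm]; [nra|].
  assert (Hq : 0 < m / sig) by (apply Rdiv_lt_0_compat; lra).
  assert (Hexp : exp (- (rho * t)) <= sig / m).
  { replace (sig / m) with (exp (- ln (m / sig)))
      by (rewrite exp_Ropp, exp_ln by exact Hq; field; lra).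
    left; apply exp_increasing.
    assert (rho * t >= rho * (1 + Rabs (ln (m / sig)) / rho))
      by (apply Rle_ge, Rmult_le_compat_l; lra).
    replace (rho * (1 + Rabs (ln (m / sig)) / rho))
      with (rho + Rabs (ln (m / sig))) in * by (field; lra).
    pose proof (Rle_abs (ln (m / sig))); lra. }
  assert ((m - sig) * exp (- (rho * t)) <= (m - sig) * (sig / m))
    by (apply Rmult_le_compat_l; lra).
  assert ((m - sig) * (sig / m) = sig - sig * (sig / m)) by (field; lra).
  assert (0 < sig / m) by (apply Rdiv_lt_0_compat; lra).
  nra.
Qed.

Lemma Rpower_INR_ge_1 k gamma : (1 <= k)%nat -> 0 <= gamma -> 1 <= Rpower (INR k) gamma.
Proof.
  intros Hk Hgamma; rewrite <- (Rpower_O (INR k)) by (apply lt_0_INR; lia).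
  apply Rle_Rpower; [apply (le_INR 1); exact Hk|exact Hgamma].
Qed.

Lemma fsum_first_moment_le_series s S n :
  (forall k, (1 <= k)%nat -> 0 <= s k) ->
  series_sum (fun k => Rpower (INR k) 1 * s k) S ->
  fsum (fun k => INR k * s k) n <= S.
Proof.
  intros Hs HS.
  assert (Hpow : forall k, (1 <= k)%nat -> Rpower (INR k) 1 = INR k)
    by (intros k Hk; apply Rpower_1, lt_0_INR; lia).
  rewrite (fsum_ext _ (fun k => Rpower (INR k) 1 * s k))
    by (intros k Hk; rewrite Hpow by lia; reflexivity).
  apply fsum_le_series_sum; [|exact HS].
  intros k Hk; rewrite Hpow by exact Hk; apply Rmult_le_pos; [apply pos_INR|auto].
Qed.

Theorem mainTheorem5 :
  exists Tf : R -> R -> R -> R,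
  forall (a : nat -> nat -> R) (r s : nat -> R)
         (Astar alpha beta Rstar gamma : R) (frak_s : R -> R)
         (cin : nat -> R) (m1in : R) (c : nat -> R -> R),
    0 < Astar -> 0 <= alpha -> alpha <= beta -> beta <= 1 ->
    (forall k l, (1 <= k)%nat -> (1 <= l)%nat ->
       a k l = a l k /\ 0 <= a k l /\
       a k l <= Astar * (Rpower (INR k) alpha * Rpower (INR l) beta
                         + Rpower (INR k) beta * Rpower (INR l) alpha)) ->
    0 < Rstar -> Rmax 0 (alpha + beta - 1) < gamma ->
    (forall k, (1 <= k)%nat -> Rstar * Rpower (INR k) gamma <= r k) ->
    (forall k, (1 <= k)%nat -> 0 <= s k) ->
    (forall mu, 0 <= mu -> 0 < frak_s mu /\
       exists S, series_sum (fun k => Rpower (INR k) mu * s k) S /\ S <= frak_s mu) ->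
    (forall k, (1 <= k)%nat -> 0 <= cin k) ->
    series_sum (fun k => INR k * cin k) m1in ->
    global_solution a s r cin c ->
    (forall t m1, 0 <= t -> series_sum (fun k => INR k * c k t) m1 ->
       m1 <= Rmax m1in (frak_s 1 / Rstar)) /\
    0 < Tf m1in (frak_s 1 / Rstar) Rstar /\
    (forall t m1, Tf m1in (frak_s 1 / Rstar) Rstar <= t ->
       series_sum (fun k => INR k * c k t) m1 ->
       m1 <= 2 * (frak_s 1 / Rstar)).
Proof.
  exists relaxation_time.
  intros a r s Astar alpha beta Rstar gamma frak_s cin m1in c
    _ _ _ _ Ha HRstar Hgamma Hr Hs Hfrak_s _ Hm1in
    [Hc [Hcont [Hderiv [_ [_ Hinit]]]]].
  destruct (Hfrak_s 1 ltac:(lra)) as [Hs1 [S1 [HS1 HS1_le]]].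
  assert (Hgamma0 : 0 <= gamma) by (pose proof (Rmax_l 0 (alpha + beta - 1)); lra).
  assert (Hbound : forall t m1, 0 <= t -> series_sum (fun k => INR k * c k t) m1 ->
            m1 <= frak_s 1 / Rstar + (m1in - frak_s 1 / Rstar) * exp (- (Rstar * t))).
  { intros t m1; apply (first_moment_le a r s c Rstar (frak_s 1)) with (cin := cin); auto.
    - intros k l Hk Hl; apply (Ha k l Hk Hl).
    - intros k l Hk Hl; apply (Ha k l Hk Hl).
    - intros k Hk; pose proof (Rpower_INR_ge_1 k gamma Hk Hgamma0);
        pose proof (Hr k Hk); nra.
    - intros n; pose proof (fsum_first_moment_le_series s S1 n Hs HS1); lra.
    - intros k Hk; apply (Hcont k 0 Hk (Rle_refl 0)). }
  assert (Hsig : 0 < frak_s 1 / Rstar) by (apply Rdiv_lt_0_compat; assumption).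
  split; [|split].
  - intros t m1 Ht Hm1; eapply Rle_trans; [apply (Hbound t m1 Ht Hm1)|].
    apply relaxation_le_Rmax; lra.
  - apply relaxation_time_pos; exact HRstar.
  - intros t m1 Ht Hm1.
    pose proof (relaxation_time_pos m1in (frak_s 1 / Rstar) Rstar HRstar).
    eapply Rle_trans; [apply (Hbound t m1 ltac:(lra) Hm1)|].
    apply relaxation_le_twice; assumption.
Qed.
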